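(* In the setting above (data $\mathbf X_0,\mathbf X_1$ generated by $\dot{\mathbf x}=\mathscr A\mathbf x^{k-1}$ with $\mathscr A$ almost symmetric, so that $\mathbf X_1=\mathbf A_{(k)}\hat{\mathbf X}_0$), suppose $$\mathrm{rank}(\hat{\mathbf X}_0)=\sum_{j=1}^{\min\{n,k-1\}}\frac{n!}{j!(n-j)!}\cdot\frac{(k-2)!}{(j-1)!(k-j-1)!},$$ and let $\hat{\mathbf X}_0=\hat{\mathbf U}_0\hat{\boldsymbol\Sigma}_0\hat{\mathbf V}_0^\top$ be a compact singular value decomposition. Then $\mathbf A_{(k)}=\mathbf X_1\hat{\mathbf V}_0\hat{\boldsymbol\Sigma}_0^{+}\hat{\mathbf U}_0^\top$, where $\hat{\boldsymbol\Sigma}_0^{+}$ is the Moore–Penrose pseudoinverse; in particular this matrix is the $k$-mode matricization of an almost symmetric tensor.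
   Context: A cubical $k$th-order tensor $\mathscr A\in\mathbb R^{n\times\cdots\times n}$ is almost symmetric if its entries are invariant under every permutation of the first $k-1$ indices. The $k$-mode matricization $\mathbf A_{(k)}\in\mathbb R^{n\times n^{k-1}}$ is defined by $(\mathbf A_{(k)})_{j_k,c}=\mathscr A_{j_1\cdots j_k}$ with $c=j_1+\sum_{i=2}^{k-1}(j_i-1)n^{i-1}$; then $\mathscr A\mathbf x^{k-1}:=\mathscr A\times_1\mathbf x\cdots\times_{k-1}\mathbf x=\mathbf A_{(k)}\mathbf x^{[k-1]}$ with $\mathbf x^{[k-1]}$ the $(k-1)$-fold Kronecker power. $\hat{\mathbf X}_0=\mathbf X_0\odot\cdots\odot\mathbf X_0$ ($k-1$ factors) is the iterated Khatri–Rao (columnwise Kronecker) product of $\mathbf X_0=[\mathbf x(t_0),\dots,\mathbf x(t_0+(T-1)\tau)]\in\mathbb R^{n\times T}$, and $\mathbf X_1=[\dot{\mathbf x}(t_0),\dots,\dot{\mathbf x}(t_0+(T-1)\tau)]$. A compact SVD keeps only the nonzero singular values, so $\hat{\boldsymbol\Sigma}_0$ is square, diagonal, and invertible. *)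

From HB Require Import structures.
From mathcomp Require Import all_boot all_order all_algebra all_fingroup.
From mathcomp Require Import all_classical all_reals all_analysis.

Set Implicit Arguments.
Unset Strict Implicit.
Unset Printing Implicit Defensive.

Import Order.TTheory GRing.Theory Num.Theory.
Local Open Scope ring_scope.

(* A k-th order cubical tensor of size n x ... x n, indexed (0-based) by
   functions j : 'I_k -> 'I_n  (j i is the (i+1)-th index). *)
Definition tensor (R : Type) (k n : nat) := {ffun 'I_k -> 'I_n} -> R.

(* Almost symmetric: invariant under every permutation of the first k-1
   indices, i.e. every permutation of 'I_k fixing the last index k-1. *)
Definition almost_symmetric (R : Type) (k n : nat) (A : tensor R k n) : Prop :=
  forall s : 'S_k, (forall i : 'I_k, val i = k.-1 -> s i = i) ->
  forall j : {ffun 'I_k -> 'I_n}, A [ffun i => j (s i)] = A j.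

Lemma digit_subproof (n m : nat) (i : 'I_m) (c : 'I_(n ^ m)) :
  ((c %/ n ^ i) %% n < n)%N.
Proof.
case: n c => [|n'] c; last by rewrite ltn_mod.
move: (nat_of_ord c) (ltn_ord c) => c'.
by rewrite exp0n // (leq_ltn_trans (leq0n _) (ltn_ord i)).
Qed.

Definition digit (n m : nat) (i : 'I_m) (c : 'I_(n ^ m)) : 'I_n :=
  Ordinal (digit_subproof i c).

(* k-mode matricization: (A_(k))_{j_k, c} = A_{j_1 ... j_k} with
   c = j_1 + sum_{i=2}^{k-1} (j_i - 1) n^{i-1} (1-based); in 0-based form
   the digits of c in base n are j_1, ..., j_{k-1}. *)
Definition matricize (R : Type) (k n : nat) (A : tensor R k n)
  : 'M[R]_(n, n ^ k.-1) :=
  \matrix_(r < n, c < n ^ k.-1)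
    A [ffun i : 'I_k => if insub (val i) is Some i' then digit i' c else r].

(* Iterated Khatri-Rao (columnwise Kronecker) product X (.) ... (.) X
   with m factors: column t is the m-fold Kronecker power of column t. *)
Definition khatri_rao_pow (R : nzRingType) (m n T : nat) (X : 'M[R]_(n, T))
  : 'M[R]_(n ^ m, T) :=
  \matrix_(c < n ^ m, t < T) \prod_(i < m) X (digit i c) t.

Definition kron_pow (R : nzRingType) (m n : nat) (x : 'cV[R]_n) : 'cV[R]_(n ^ m) :=
  khatri_rao_pow m x.

Definition tensor_apply (R : nzRingType) (k n : nat) (A : tensor R k n)
  (x : 'cV[R]_n) : 'cV[R]_n :=
  matricize A *m kron_pow k.-1 x.

Definition compact_svd (R : realFieldType) (p q r : nat) (M : 'M[R]_(p, q))
  (U : 'M[R]_(p, r)) (S : 'M[R]_r) (V : 'M[R]_(q, r)) : Prop :=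
  [/\ U^T *m U = 1%:M, V^T *m V = 1%:M,
      exists s : 'rV[R]_r,
        [/\ S = diag_mx s, forall i, 0 < s 0 i &
            forall i j : 'I_r, (i <= j)%N -> s 0 j <= s 0 i]
    & M = U *m S *m V^T].

Definition mp_pinv (R : nzRingType) (p q : nat) (M : 'M[R]_(p, q))
  (P : 'M[R]_(q, p)) : Prop :=
  [/\ M *m P *m M = M, P *m M *m P = P,
      (M *m P)^T = M *m P & (P *m M)^T = P *m M].

From HB Require Import structures.
From mathcomp Require Import all_boot all_order all_algebra all_fingroup.
From mathcomp Require Import all_classical all_reals all_analysis.
From mathcomp Require Import zify.
Set Implicit Arguments.
Unset Strict Implicit.
Unset Printing Implicit Defensive.

Import Order.TTheory GRing.Theory Num.Theory.
Local Open Scope ring_scope.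

(* Both X0hat and A_(k) are unchanged when the base-n digits of a column index
   are permuted: the columns of X0hat are Kronecker powers, and A is almost
   symmetric.  Sorting the digits maps every column index to one of the
   'C(n + k - 2, k - 1) indices with nondecreasing digits, so all such
   matrices live in a row space of that dimension.  The rank hypothesis (the
   sum is that binomial coefficient, by Vandermonde) says that the rows of
   X0hat^T span this whole space, so A_(k) = W X0hat^T = W V S U^T for some W,
   and therefore A_(k) U U^T = A_(k).  Since X1 = A_(k) X0hat = A_(k) U S V^T
   and S is invertible, X1 V S^-1 U^T = A_(k) U U^T = A_(k). *)

Definition digit_tuple n m (c : 'I_(n ^ m)) : m.-tuple 'I_n :=
  [tuple digit i c | i < m].

Lemma digit_tuple_inj n m : injective (@digit_tuple n m).
Proof.
move=> [c1 lt_c1] [c2 lt_c2] /= eq_digits; apply: val_inj => /=.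
have {}eq_digits i : (i < m)%N -> (c1 %/ n ^ i %% n = c2 %/ n ^ i %% n)%N.
  move=> lt_im; have := congr1 (fun t => val (tnth t (Ordinal lt_im))) eq_digits.
  by rewrite !tnth_mktuple.
elim: m c1 c2 lt_c1 lt_c2 eq_digits => [|m IHm] c1 c2.
  by rewrite expn0 !ltnS !leqn0 => /eqP -> /eqP ->.
case: n IHm => [|n] IHm; first by rewrite exp0n.
move=> lt_c1 lt_c2 eq_digits.
rewrite (divn_eq c1 n.+1) (divn_eq c2 n.+1).
have := eq_digits 0%N isT; rewrite expn0 !divn1 => ->.
congr (_ * _ + _)%N; apply: IHm; try by rewrite ltn_divLR // -expnSr.
by move=> i lt_im; have := eq_digits i.+1 lt_im; rewrite expnS !divnMA.
Qed.

Lemma card_digit_tuples n m : #|{: m.-tuple 'I_n}| = #|'I_(n ^ m)|.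
Proof. by rewrite card_tuple !card_ord. Qed.

Definition index_of_digits n m (t : m.-tuple 'I_n) : 'I_(n ^ m) :=
  iinv (inj_card_onto (@digit_tuple_inj n m) (eq_leq (card_digit_tuples n m)) t).

Lemma index_of_digitsK n m (t : m.-tuple 'I_n) :
  digit_tuple (index_of_digits t) = t.
Proof. exact: f_iinv. Qed.

Definition ord_leq n : rel 'I_n := relpre val leq.

Definition sort_index n m (c : 'I_(n ^ m)) : 'I_(n ^ m) :=
  index_of_digits (sort_tuple (@ord_leq n) (digit_tuple c)).

Lemma perm_sort_index n m (c : 'I_(n ^ m)) :
  perm_eq (digit_tuple (sort_index c)) (digit_tuple c).
Proof. by rewrite index_of_digitsK perm_sort. Qed.

Lemma sorted_sort_index n m (c : 'I_(n ^ m)) :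
  sorted (@ord_leq n) (digit_tuple (sort_index c)).
Proof. by rewrite index_of_digitsK sort_sorted // => a b; exact: leq_total. Qed.

Definition sorted_indices n m : {set 'I_(n ^ m)} :=
  [set c | sorted (@ord_leq n) (digit_tuple c)].

Lemma card_sorted_indices n m : #|sorted_indices n.+1 m| = 'C(m + n, m).
Proof.
rewrite -card_sorted_tuples -(card_imset _ (@digit_tuple_inj _ _)).
congr #|pred_of_set _|; apply/setP => t; rewrite inE sorted_map.
apply/imsetP/idP => [[c] | sorted_t]; first by rewrite inE => ? ->.
by exists (index_of_digits t); rewrite ?inE index_of_digitsK.
Qed.

Section SortInvariance.
Variables (n m : nat).

Definition sort_invariant (R : Type) p (B : 'M[R]_(p, n ^ m)) : Prop :=
  forall i c, B i (sort_index c) = B i c.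

(* Right multiplication by [sort_mx] replaces column [c] by column
   [sort_index c]; its columns are unit vectors indexed by [sorted_indices]. *)
Definition sort_mx (R : nzRingType) : 'M[R]_(n ^ m) :=
  \matrix_(c', c) (c' == sort_index c)%:R.

Lemma mulmx_sort_mx (R : nzRingType) p (B : 'M[R]_(p, n ^ m)) :
  sort_invariant B -> B *m sort_mx R = B.
Proof.
move=> B_inv; apply/matrixP => i c; rewrite !mxE (bigD1 (sort_index c)) //=.
rewrite mxE eqxx mulr1 big1 ?addr0 ?B_inv // => c' ne_c'.
by rewrite mxE (negbTE ne_c') mulr0.
Qed.

Lemma mxrank_sort_mx (F : fieldType) :
  (\rank (sort_mx F) <= #|sorted_indices n m|)%N.
Proof.
pose G : 'M[F]_(n ^ m, #|sorted_indices n m|) :=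
  \matrix_(c', s) (c' == enum_val s)%:R.
pose H : 'M[F]_(#|sorted_indices n m|, n ^ m) :=
  \matrix_(s, c) (enum_val s == sort_index c)%:R.
have -> : sort_mx F = G *m H.
  apply/matrixP => c' c; rewrite !mxE.
  under eq_bigr do rewrite !mxE.
  rewrite -(big_enum_val (fun d => (c' == d)%:R * (d == sort_index c)%:R)).
  have sorted_c : sort_index c \in sorted_indices n m.
    by rewrite inE sorted_sort_index.
  rewrite (bigD1 (sort_index c)) //= eqxx mulr1 big1 ?addr0 // => d /andP[_ ne_d].
  by rewrite (negbTE ne_d) mulr0.
exact: leq_trans (mxrankM_maxl _ _) (rank_leq_col _).
Qed.

Lemma sort_invariant_submx (F : fieldType) p q
    (B : 'M[F]_(p, n ^ m)) (M : 'M[F]_(q, n ^ m)) :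
  sort_invariant B -> sort_invariant M ->
  (#|sorted_indices n m| <= \rank M)%N -> (B <= M)%MS.
Proof.
move=> B_inv M_inv rank_M.
have sub_M : (M <= sort_mx F)%MS by rewrite -(mulmx_sort_mx M_inv) submxMl.
have sub_sort : (sort_mx F <= M)%MS.
  rewrite -(mxrank_leqif_sup sub_M).2 eqn_leq (mxrank_leqif_sup sub_M).1.
  exact: leq_trans (mxrank_sort_mx F) rank_M.
by rewrite -(mulmx_sort_mx B_inv) (submx_trans (submxMl _ _) sub_sort).
Qed.

Lemma khatri_rao_pow_sort_invariant (R : comNzRingType) T (X : 'M[R]_(n, T)) :
  sort_invariant (khatri_rao_pow m X)^T.
Proof.
move=> t c; rewrite !mxE.
have prod_digits d :
    \prod_(i < m) X (digit i d) t = \prod_(a <- digit_tuple d) X a t.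
  by rewrite big_tuple; apply: eq_bigr => i _; rewrite tnth_mktuple.
by rewrite !prod_digits; apply: perm_big; exact: perm_sort_index.
Qed.

End SortInvariance.

Lemma matricize_sort_invariant (R : Type) n m (A : tensor R m.+1 n) :
  almost_symmetric A -> sort_invariant (matricize A).
Proof.
move=> A_sym r c.
have [p digits_p] := tuple_permP (perm_sort_index c).
have digit_p i : digit i (sort_index c) = digit (p i) c.
  have := congr1 (fun t => tnth t i) (val_inj digits_p : _ = [tuple _ | _ < _]).
  by rewrite !tnth_mktuple.
have fix_last i : val i = m.+1.-1 -> lift_perm ord_max ord_max p^-1 i = i.
  by move=> /= i_m; rewrite (_ : i = ord_max) ?lift_perm_id //; apply: val_inj.
rewrite !mxE -(A_sym _ fix_last); congr (A _); apply/ffunP => i; rewrite !ffunE.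
case: (unliftP ord_max i) => [i'|] ->; last by rewrite lift_perm_id /= insubF //= ltnn.
by rewrite lift_perm_lift /= /bump !(leqNgt m) !ltn_ord /= !add0n !valK digit_p permKV.
Qed.

(* Vandermonde's identity, after the reindexing j |-> m.+1 - j. *)
Lemma sum_binomial_multisets n m :
  (\sum_(1 <= j < (minn n.+1 m.+1).+1) 'C(n.+1, j) * 'C(m, j - 1))%N =
  'C(m.+1 + n, m.+1).
Proof.
transitivity (\sum_(1 <= j < m.+2) 'C(n.+1, j) * 'C(m, j - 1))%N.
  have le_min : (1 <= (minn n.+1 m.+1).+1 <= m.+2)%N by lia.
  rewrite [RHS](big_cat_nat (n := (minn n.+1 m.+1).+1)) //=.
  rewrite [X in (_ = _ + X)%N]big_nat_cond [X in (_ = _ + X)%N]big1 ?addn0 //.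
  by move=> j /andP[/andP[gt_min lt_j] _]; rewrite bin_small ?mul0n //; lia.
have := binomial.Vandermonde n.+1 m m.+1.
rewrite -(big_mkord xpredT (fun j => 'C(n.+1, j) * 'C(m, m.+1 - j))%N).
rewrite big_ltn // subn0 (@bin_small m m.+1) // muln0 add0n addSnnS addnC => <-.
apply: eq_big_nat => j /andP[j_gt0 j_lt].
rewrite -(@bin_sub m (j - 1)); last by lia.
by congr (_ * 'C(_, _))%N; lia.
Qed.

Lemma matricize_submx_khatri_rao_pow (F : fieldType) n k T
    (A : tensor F k n) (X : 'M[F]_(n, T)) :
  (2 <= k)%N -> almost_symmetric A ->
  \rank (khatri_rao_pow k.-1 X) =
    (\sum_(1 <= j < (minn n k.-1).+1) 'C(n, j) * 'C(k - 2, j - 1))%N ->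
  (matricize A <= (khatri_rao_pow k.-1 X)^T)%MS.
Proof.
case: k A => [|[|m]] A //= _ A_sym rank_X.
case: n A X rank_X A_sym => [|n] A X rank_X A_sym.
  by rewrite flatmx0 sub0mx.
apply: sort_invariant_submx;
  [exact: matricize_sort_invariant | exact: khatri_rao_pow_sort_invariant |].
by rewrite mxrank_tr rank_X subSS subn1 sum_binomial_multisets card_sorted_indices.
Qed.

Lemma mulmx_orthonormal_proj (F : fieldType) p q r s
    (B : 'M[F]_(p, q)) (M : 'M[F]_(q, s))
    (U : 'M[F]_(q, r)) (S : 'M[F]_r) (V : 'M[F]_(s, r)) :
  (B <= M^T)%MS -> M = U *m S *m V^T -> U^T *m U = 1%:M ->
  B *m U *m U^T = B.
Proof.
move=> /submxP[W ->] -> U_orth.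
by rewrite !trmx_mul trmxK -!mulmxA (mulmxA U^T) U_orth mul1mx.
Qed.

Lemma col_khatri_rao_pow (R : nzRingType) m n T (X : 'M[R]_(n, T)) t :
  col t (khatri_rao_pow m X) = kron_pow m (col t X).
Proof.
by apply/matrixP => c i; rewrite !mxE ord1; apply: eq_bigr => l _; rewrite mxE.
Qed.

Lemma matricize_mul_khatri_rao_pow (R : nzRingType) k n T
    (A : tensor R k n) (X Y : 'M[R]_(n, T)) :
  (forall t, col t Y = tensor_apply A (col t X)) ->
  Y = matricize A *m khatri_rao_pow k.-1 X.
Proof.
move=> cols_Y; apply/matrixP => i t.
have := congr1 (fun v : 'cV_n => v i 0) (cols_Y t); rewrite mxE => ->.
by rewrite /tensor_apply -col_khatri_rao_pow colE mulmxA -colE mxE.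
Qed.

Lemma compact_svd_unitmx (R : realFieldType) p q r (M : 'M[R]_(p, q))
    (U : 'M[R]_(p, r)) (S : 'M[R]_r) (V : 'M[R]_(q, r)) :
  compact_svd M U S V -> S \in unitmx.
Proof.
case=> _ _ [s [-> s_gt0 _]] _.
by rewrite unitmxE det_diag unitfE; apply/prodf_neq0 => i _; exact: lt0r_neq0.
Qed.

Lemma mp_pinv_invmx (R : comUnitRingType) r (S : 'M[R]_r) :
  S \in unitmx -> mp_pinv S (invmx S).
Proof. by move=> S_unit; split; rewrite ?mulmxV ?mulVmx ?mul1mx ?mulmx1 ?trmx1. Qed.

Lemma mp_pinv_unitmx (R : comUnitRingType) r (S P : 'M[R]_r) :
  S \in unitmx -> mp_pinv S P -> P = invmx S.
Proof.
move=> S_unit [SPS _ _ _].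
have SP : S *m P = 1%:M by rewrite -(mulmxK S_unit (S *m P)) SPS mulmxV.
by rewrite -[P](mulKmx S_unit) SP mulmx1.
Qed.

Theorem mainTheorem2 (R : realType) (n k T : nat) (A : tensor R k n)
  (x : R -> 'cV[R]_n) (t0 tau : R) (r : nat)
  (U : 'M[R]_(n ^ k.-1, r)) (S : 'M[R]_r) (V : 'M[R]_(T, r)) :
  (2 <= k)%N ->
  almost_symmetric A ->
  (forall (t : R) (i : 'I_n), derivable (fun s => x s i 0) t 1) ->
  (forall t : R, \col_i derive1 (fun s => x s i 0) t = tensor_apply A (x t)) ->
  let X0 : 'M[R]_(n, T) := \matrix_(i, j) x (t0 + j%:R * tau) i 0 in
  let X1 : 'M[R]_(n, T) :=
    \matrix_(i, j) derive1 (fun s => x s i 0) (t0 + j%:R * tau) in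
  let X0hat := khatri_rao_pow k.-1 X0 in
  \rank X0hat =
    (\sum_(1 <= j < (minn n k.-1).+1) 'C(n, j) * 'C(k - 2, j - 1))%N ->
  compact_svd X0hat U S V ->
  (exists P, mp_pinv S P) /\
  forall P : 'M[R]_r, mp_pinv S P ->
    matricize A = X1 *m V *m P *m U^T /\
    exists B : tensor R k n,
      almost_symmetric B /\ matricize B = X1 *m V *m P *m U^T.
Proof.
move=> k_ge2 A_sym _ ode X0 X1 X0hat rank_X0hat svd.
have S_unit := compact_svd_unitmx svd.
case: svd => U_orth V_orth _ X0hat_svd.
split=> [|P /(mp_pinv_unitmx S_unit) ->].
  by exists (invmx S); exact: mp_pinv_invmx.
have X1_eq : X1 = matricize A *m X0hat.
  apply: matricize_mul_khatri_rao_pow => t.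
  have col_X0 : col t X0 = x (t0 + t%:R * tau).
    by apply/matrixP => i j; rewrite !mxE (ord1 j).
  by rewrite col_X0 -ode; apply/matrixP => i j; rewrite [LHS]mxE [RHS]mxE mxE.
have proj_A : matricize A *m U *m U^T = matricize A.
  apply: mulmx_orthonormal_proj X0hat_svd U_orth.
  exact: matricize_submx_khatri_rao_pow.
have A_eq : matricize A = X1 *m V *m invmx S *m U^T.
  by rewrite X1_eq X0hat_svd -!mulmxA (mulmxA V^T) V_orth mul1mx
    (mulmxA S) mulmxV // mul1mx mulmxA proj_A.
by split=> //; exists A.
Qed.
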